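(* Suppose $f\colon\prod_{i\in[n]}X_i\to Y$ satisfies condition (BC) and $\Phi_k^-\le\Phi_k^+$ for all $k\in[n]$. Then for all $\mathbf{x}\in\prod_{i\in[n]}X_i$ and $k\in[n]$, $$f(\mathbf{x})=\operatorname{med}\big(f(\mathbf{x}_k^0),\Phi_k^-(x_k),f(\mathbf{x}_k^1)\big)=\operatorname{med}\big(f(\mathbf{x}_k^0),\Phi_k^+(x_k),f(\mathbf{x}_k^1)\big).$$
   Context: $Y$ is a finite distributive lattice identified with a sublattice of $\mathcal{P}(U)$ for a finite set $U$, with least element $0=\emptyset$, greatest element $1=U$, and $\wedge,\vee$ being intersection and union; $\overline{S}=U\setminus S$. For $S\subseteq U$, $\operatorname{cl}(S)=\bigwedge\{y\in Y: y\ge S\}$, $\operatorname{int}(S)=\bigvee\{y\in Y: y\le S\}$. $[n]=\{1,\ldots,n\}$; $X_1,\ldots,X_n$ are arbitrary sets with at least two elements, each with two fixed distinct elements $0_{X_k},1_{X_k}$ (written $0,1$). For $\mathbf{x}\in\prod_i X_i$ and $a\in X_k$, $\mathbf{x}_k^a$ is $\mathbf{x}$ with $k$-th component replaced by $a$. $\operatorname{med}(y_1,y_2,y_3)=(y_1\wedge y_2)\vee(y_2\wedge y_3)\vee(y_3\wedge y_1)$. Condition (BC): $f(\mathbf{x}_k^0)\le f(\mathbf{x})\le f(\mathbf{x}_k^1)$ for all $k\in[n]$ and all $\mathbf{x}$. For $k\in[n]$, $a_k\in X_k$: $$\Phi_k^-(a_k)=\bigvee_{\mathbf{x}:\,x_k=a_k}\operatorname{cl}\big(f(\mathbf{x})\wedge\overline{f(\mathbf{x}_k^0)}\big),\qquad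 \Phi_k^+(a_k)=\bigwedge_{\mathbf{x}:\,x_k=a_k}\operatorname{int}\big(f(\mathbf{x})\vee\overline{f(\mathbf{x}_k^1)}\big),$$ ranging over all $\mathbf{x}$ with $k$-th component $a_k$. *)

From mathcomp Require Import all_boot.
From Stdlib Require Import ClassicalEpsilon.
Set Implicit Arguments. Unset Strict Implicit. Unset Printing Implicit Defensive.

Definition pbool (P : Prop) : bool :=
  if excluded_middle_informative P then true else false.

Section Defs.
Variable U : finType.

Definition sublattice01 (Y : {set {set U}}) : Prop :=
  [/\ set0 \in Y, [set: U] \in Y,
      (forall a b, a \in Y -> b \in Y -> a :&: b \in Y) &
      (forall a b, a \in Y -> b \in Y -> a :|: b \in Y)].

Definition clY (Y : {set {set U}}) (S : {set U}) : {set U} :=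
  \bigcap_(y in Y | S \subset y) y.
Definition intY (Y : {set {set U}}) (S : {set U}) : {set U} :=
  \bigcup_(y in Y | y \subset S) y.

Definition med (a b c : {set U}) : {set U} :=
  (a :&: b) :|: (b :&: c) :|: (c :&: a).
End Defs.

Section Upd.
Variables (n : nat) (X : 'I_n -> Type).

(* x_k^a : x with k-th component replaced by a *)
Definition upd (x : forall i, X i) (k : 'I_n) (a : X k) : forall i, X i :=
  fun i => match @eqP _ k i with
           | ReflectT e => eq_rect k X a i e
           | ReflectF _ => x i
           end.

Variables (U : finType) (Y : {set {set U}}) (f : (forall i, X i) -> {set U}).

(* Condition (BC), with 0_{X_k} = x0 k, 1_{X_k} = x1 k *)
Definition BC (x0 x1 : forall i, X i) : Prop :=
  forall (k : 'I_n) (x : forall i, X i),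
    f (upd x (x0 k)) \subset f x /\ f x \subset f (upd x (x1 k)).

(* Phi_k^-(a) = join over x with x_k = a of cl(f x /\ ~ f(x_k^0)); since
   joins in Y are unions, this is the union of the (finitely many distinct)
   values. *)
Definition PhiMinus (x0 : forall i, X i) (k : 'I_n) (a : X k) : {set U} :=
  \bigcup_(S : {set U} | pbool (exists x : forall i, X i,
        x k = a /\ S = clY Y (f x :&: ~: f (upd x (x0 k))))) S.

Definition PhiPlus (x1 : forall i, X i) (k : 'I_n) (a : X k) : {set U} :=
  \bigcap_(S : {set U} | pbool (exists x : forall i, X i,
        x k = a /\ S = intY Y (f x :|: ~: f (upd x (x1 k))))) S.
End Upd.

From mathcomp Require Import all_boot.
From Stdlib Require Import ClassicalEpsilon.
Set Implicit Arguments. Unset Strict Implicit. Unset Printing Implicit Defensive.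

(* Fix x and k, and write A = f(x_k^0), F = f(x), B = f(x_k^1).
   By (BC), A <= F <= B.  For sets in a chain A <= F <= B, the median
   med(A, P, B) equals F as soon as P lies between the two "witnesses"
   F \ A and F \/ ~B, i.e.  F \ A <= P  and  P /\ B <= F
   (lemma [med_chain_eq]).  Now F \ A <= cl(F \ A) <= Phi_k^-(x_k), since x
   itself is one of the points over which Phi_k^- is a join, and dually
   Phi_k^+(x_k) <= int(F \/ ~B) <= F \/ ~B.  With the hypothesis
   Phi_k^- <= Phi_k^+ both Phi_k^-(x_k) and Phi_k^+(x_k) are therefore
   squeezed between the witnesses, which gives both equalities. *)

Lemma pboolT (P : Prop) : P -> pbool P.
Proof. by rewrite /pbool; case: excluded_middle_informative. Qed.

Section ClosureInterior.
Variables (U : finType) (Y : {set {set U}}).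

Lemma sub_clY (S : {set U}) : S \subset clY Y S.
Proof. by apply/bigcapsP => y /andP[]. Qed.

Lemma intY_sub (S : {set U}) : intY Y S \subset S.
Proof. by apply/bigcupsP => y /andP[]. Qed.

End ClosureInterior.

Lemma med_chain_eq (U : finType) (A P B F : {set U}) :
  A \subset F -> F \subset B -> F :\: A \subset P -> P :&: B \subset F ->
  F = med A P B.
Proof.
move=> /subsetP AF /subsetP FB /subsetP FAP /subsetP PBF; apply/setP => u.
move: (AF u) (FB u) (FAP u) (PBF u); rewrite /med !inE.
case: (u \in A) (u \in F) (u \in P) (u \in B) => [] [] [] [] //= h1 h2 h3 h4;
  by [move: (h1 isT) | move: (h2 isT) | move: (h3 isT) | move: (h4 isT)].
Qed.

Section PhiBounds.
Variables (n : nat) (X : 'I_n -> Type) (U : finType) (Y : {set {set U}}).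
Variables (f : (forall i, X i) -> {set U}) (x0 x1 : forall i, X i).

(* Lower witness: f(x) \ f(x_k^0) <= Phi_k^-(x_k), as x contributes the
   term cl(f(x) /\ ~f(x_k^0)) to the join defining Phi_k^-(x_k). *)
Lemma PhiMinus_lower (x : forall i, X i) (k : 'I_n) :
  f x :\: f (upd x (x0 k)) \subset PhiMinus Y f x0 (x k).
Proof.
rewrite setDE; apply: (subset_trans (sub_clY Y _)).
by apply: (bigcup_sup _ (F := id)); apply: pboolT; exists x.
Qed.

(* Upper witness: Phi_k^+(x_k) /\ f(x_k^1) <= f(x), as x contributes the
   term int(f(x) \/ ~f(x_k^1)) to the meet defining Phi_k^+(x_k). *)
Lemma PhiPlus_upper (x : forall i, X i) (k : 'I_n) :
  PhiPlus Y f x1 (x k) :&: f (upd x (x1 k)) \subset f x.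
Proof.
have Phi_sub : PhiPlus Y f x1 (x k) \subset f x :|: ~: f (upd x (x1 k)).
  apply: (subset_trans _ (intY_sub Y _)).
  by apply: (bigcap_inf _ (F := id)); apply: pboolT; exists x.
apply/subsetP => u /setIP[/(subsetP Phi_sub)].
by rewrite !inE => /orP[// | /negP].
Qed.

End PhiBounds.

Theorem mainTheorem5 (U : finType) (Y : {set {set U}}) (n : nat)
  (X : 'I_n -> Type) (x0 x1 : forall i, X i)
  (f : (forall i, X i) -> {set U}) :
  sublattice01 Y ->
  (forall i, x0 i <> x1 i) ->
  (forall x, f x \in Y) ->
  BC f x0 x1 ->
  (forall (k : 'I_n) (a : X k), PhiMinus Y f x0 a \subset PhiPlus Y f x1 a) ->
  forall (x : forall i, X i) (k : 'I_n),
    f x = med (f (upd x (x0 k))) (PhiMinus Y f x0 (x k)) (f (upd x (x1 k))) /\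
    f x = med (f (upd x (x0 k))) (PhiPlus Y f x1 (x k)) (f (upd x (x1 k))).
Proof.
move=> _ _ _ bc Phi_le x k.
have [AF FB] := bc k x.
have lower := PhiMinus_lower Y f x0 x k.
have upper := PhiPlus_upper Y f x1 x k.
have le_k := Phi_le k (x k).
split; apply: med_chain_eq => //.
- exact: subset_trans (setSI _ le_k) upper.
- exact: subset_trans lower le_k.
Qed.
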